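(* Let $A$ be an evolution algebra with natural basis $B=\{e_i:i\in\Lambda\}$, and let $J$ be a non-zero ideal of $A$ with support $\Lambda_J$. Then $I_1=\mathrm{lin}\{e_i^2:i\in\Lambda_J\cup D(\Lambda_J)\}$ and $I_2=\mathrm{lin}\{e_i:i\in\Lambda_J\cup D(\Lambda_J)\}$ are ideals of $A$ and $I_1\subseteq J\subseteq I_2$. Moreover, if $\dim A<\infty$ and $\det M_B(A)\neq0$, then $I_1=J=I_2$.
   Context: An evolution algebra is an algebra $A$ over $\mathbb{K}\in\{\mathbb{R},\mathbb{C}\}$ with a basis $\{e_i:i\in\Lambda\}$ (natural basis) with $e_ie_j=0$ for $i\neq j$; write $e_i^2=\sum_k\omega_{ki}e_k$ and $M_B(A)=(\omega_{ki})$. Support: $\Lambda_a=\{i:\alpha_i\neq0\}$ for $a=\sum\alpha_ie_i$, $\Lambda_S=\bigcup_{a\in S}\Lambda_a$. Descendents: $D^1(i)=\{j:\omega_{ji}\neq0\}$, $D^n(i)=\bigcup_{j\in D^{n-1}(i)}D^1(j)$, $D(i)=\bigcup_{n\ge1}D^n(i)$, $D(\Lambda_0)=\bigcup_{i\in\Lambda_0}D(i)$. *)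

From HB Require Import structures.
From mathcomp Require Import all_boot all_order all_algebra.
Set Implicit Arguments. Unset Strict Implicit. Unset Printing Implicit Defensive.
Import Order.TTheory GRing.Theory Num.Theory.
Local Open Scope ring_scope.

(* Subsets of A (possibly infinite-dimensional) are predicates A -> Prop. *)

Definition lincomb (K : fieldType) (A : lmodType K) (L : eqType)
  (f : L -> A) (s : seq L) (c : L -> K) : A := \sum_(i <- s) c i *: f i.

Definition lin (K : fieldType) (A : lmodType K) (L : eqType)
  (f : L -> A) (X : L -> Prop) : A -> Prop :=
  fun x => exists (s : seq L) (c : L -> K),
    (forall i, i \in s -> X i) /\ x = lincomb f s c.

Definition is_basis (K : fieldType) (A : lmodType K) (L : eqType) (e : L -> A) : Prop :=
  (forall x : A, exists (s : seq L) (c : L -> K), x = lincomb e s c) /\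
  (forall (s : seq L) (c : L -> K), uniq s -> lincomb e s c = 0 ->
      forall i, i \in s -> c i = 0).

Definition bilinear_mul (K : fieldType) (A : lmodType K) (mul : A -> A -> A) : Prop :=
  (forall x y z, mul (x + y) z = mul x z + mul y z) /\
  (forall x y z, mul x (y + z) = mul x y + mul x z) /\
  (forall (a : K) x y, mul (a *: x) y = a *: mul x y) /\
  (forall (a : K) x y, mul x (a *: y) = a *: mul x y).

Definition natural_basis (K : fieldType) (A : lmodType K) (L : eqType)
  (mul : A -> A -> A) (e : L -> A) (omega : L -> L -> K) : Prop :=
  is_basis e /\
  (forall i j, i != j -> mul (e i) (e j) = 0) /\
  (forall i, exists s : seq L, uniq s /\ (forall k, omega k i != 0 -> k \in s) /\
      mul (e i) (e i) = lincomb e s (fun k => omega k i)).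

Definition supp (K : fieldType) (A : lmodType K) (L : eqType)
  (e : L -> A) (a : A) (i : L) : Prop :=
  exists (s : seq L) (c : L -> K),
    uniq s /\ a = lincomb e s c /\ i \in s /\ c i != 0.

Definition suppS (K : fieldType) (A : lmodType K) (L : eqType)
  (e : L -> A) (S : A -> Prop) (i : L) : Prop :=
  exists a, S a /\ supp e a i.

Definition D1 (K : fieldType) (L : eqType) (omega : L -> L -> K) (i j : L) : Prop :=
  omega j i != 0.

Fixpoint descn (K : fieldType) (L : eqType) (omega : L -> L -> K) (n : nat) (i j : L)
  : Prop :=
  match n with
  | 0 => i = j
  | n'.+1 => exists k, descn omega n' i k /\ D1 omega k j
  end.

Definition desc (K : fieldType) (L : eqType) (omega : L -> L -> K) (i j : L) : Prop :=
  exists n, (0 < n)%N /\ descn omega n i j.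

Definition descS (K : fieldType) (L : eqType) (omega : L -> L -> K) (X : L -> Prop)
  (j : L) : Prop := exists i, X i /\ desc omega i j.

Definition is_ideal (K : fieldType) (A : lmodType K) (mul : A -> A -> A)
  (J : A -> Prop) : Prop :=
  J 0 /\ (forall x y, J x -> J y -> J (x + y)) /\
  (forall (a : K) x, J x -> J (a *: x)) /\
  (forall x y, J x -> J (mul x y)) /\ (forall x y, J x -> J (mul y x)).

Definition struct_mx (K : fieldType) (L : eqType) (omega : L -> L -> K) (s : seq L)
  : 'M[K]_(size s) :=
  \matrix_(p < size s, q < size s) omega (tnth (in_tuple s) p) (tnth (in_tuple s) q).

From HB Require Import structures.
From mathcomp Require Import all_boot all_order all_algebra.
From Stdlib Require Import ClassicalEpsilon.
Import Order.TTheory GRing.Theory Num.Theory.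
Set Implicit Arguments. Unset Strict Implicit.
Local Open Scope ring_scope.

(* Write X for the support of J together with its descendants. X is closed
   under one-step descent (omega_ji <> 0), and this alone makes lin{e_i : X}
   and lin{e_i^2 : X} ideals, since e_i e_j = 0 for i <> j and
   e_i^2 e_j = omega_ji e_j^2.
   If i is in the support of some x in J, then x e_i in J is a non-zero
   multiple of e_i^2, and multiplying by e_j propagates this along descents;
   hence lin{e_i^2 : X} is contained in J, while J is contained in
   lin{e_i : X} by definition of the support.
   The linear map e_i |-> e_i^2 has matrix M_B(A) and, by closure under
   descent, maps lin{e_i : X} into itself; when it is invertible it maps this
   finite-dimensional space onto itself, so lin{e_i : X} = lin{e_i^2 : X}. *)

Section Subspace.
Variables (K : fieldType) (A : lmodType K).

Definition subspace (P : A -> Prop) :=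
  P 0 /\ (forall x y, P x -> P y -> P (x + y)) /\
  (forall (a : K) x, P x -> P (a *: x)).

Lemma subspace_sum (P : A -> Prop) (I : Type) (r : seq I) (Q : pred I) (F : I -> A) :
  subspace P -> (forall i, Q i -> P (F i)) -> P (\sum_(i <- r | Q i) F i).
Proof. by move=> [P0 [PD _]] PF; apply: big_ind. Qed.

Lemma subspace_lincomb (L : eqType) (P : A -> Prop) (f : L -> A) s c :
  subspace P -> (forall i, i \in s -> P (c i *: f i)) -> P (lincomb f s c).
Proof. by move=> sP Pf; rewrite /lincomb big_seq; apply: subspace_sum. Qed.

Lemma subspace_scale (P : A -> Prop) (a : K) v :
  subspace P -> (a != 0 -> P v) -> P (a *: v).
Proof.
move=> [P0 [_ PZ]] Pv; have [->|/Pv] := eqVneq a 0; first by rewrite scale0r.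
exact: PZ.
Qed.

Lemma ideal_subspace (mul : A -> A -> A) (J : A -> Prop) :
  is_ideal mul J -> subspace J.
Proof. by case=> J0 [JD [JZ _]]. Qed.

Lemma lincomb_undup (L : eqType) (f : L -> A) s c :
  lincomb f s c = lincomb f (undup s) (fun i => (count_mem i s)%:R * c i).
Proof.
rewrite /lincomb -big_undup_iterop_count; apply: eq_bigr => i _.
rewrite Monoid.iteropE -scalerA scaler_nat.
by elim: (count_mem i s) => //= n ->; rewrite mulrS.
Qed.

Lemma big_mkcond_subseq (L : eqType) (s u : seq L) (F : L -> A) :
  uniq s -> uniq u -> {subset s <= u} ->
  \sum_(i <- u) (if i \in s then F i else 0) = \sum_(i <- s) F i.
Proof.
move=> us uu su; rewrite -big_mkcond -big_filter; apply: perm_big.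
apply: uniq_perm; [exact: filter_uniq | by [] |] => i.
by rewrite mem_filter; case: (boolP (i \in s)) => //= /su ->.
Qed.

Lemma lin_subspace (L : eqType) (f : L -> A) (X : L -> Prop) : subspace (lin f X).
Proof.
split; first by exists [::], (fun _ => 0); rewrite /lincomb big_nil.
split=> [x y [s [c [Xs ->]]] [t [d [Xt ->]]] | a x [s [c [Xs ->]]]]; last first.
  exists s, (fun i => a * c i); split=> //.
  by rewrite /lincomb scaler_sumr; apply: eq_bigr => i _; rewrite scalerA.
rewrite (lincomb_undup f s) (lincomb_undup f t).
set c' := fun i => _ * c i; set d' := fun i => _ * d i.
exists (undup (undup s ++ undup t)),
  (fun i => (if i \in undup s then c' i else 0) + (if i \in undup t then d' i else 0)).
split=> [i|].
  by rewrite mem_undup mem_cat !mem_undup => /orP[/Xs|/Xt].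
rewrite /lincomb.
under [RHS]eq_bigr => i _ do
  rewrite scalerDl !(fun_if (fun a => a *: f i)) !scale0r.
rewrite big_split /= !big_mkcond_subseq ?undup_uniq // => i si;
  by rewrite mem_undup mem_cat si ?orbT.
Qed.

Lemma lin_gen (L : eqType) (f : L -> A) (X : L -> Prop) i : X i -> lin f X (f i).
Proof.
move=> Xi; exists [:: i], (fun _ => 1); split; first by move=> j /[!inE] /eqP ->.
by rewrite /lincomb big_seq1 scale1r.
Qed.

Lemma lin_min (L : eqType) (P : A -> Prop) (f : L -> A) (X : L -> Prop) :
  subspace P -> (forall i, X i -> P (f i)) -> forall x, lin f X x -> P x.
Proof.
move=> sP Pf x [s [c [Xs ->]]]; apply: subspace_lincomb => // i /Xs /Pf.
exact: sP.2.2.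
Qed.

End Subspace.

Lemma submx_unit_stable (F : fieldType) m n (D : 'M[F]_(m, n)) (N : 'M_n) :
  N \in unitmx -> (D *m N <= D)%MS -> (D <= D *m N)%MS.
Proof.
move=> N_unit DN_D; have [_] := mxrank_leqif_eq DN_D.
by rewrite mxrankMfree ?row_free_unit // eqxx => /esym/andP[].
Qed.

Section EvolutionAlgebra.
Variables (K : fieldType) (A : lmodType K) (L : eqType)
  (mul : A -> A -> A) (e : L -> A) (omega : L -> L -> K).
Hypothesis hbil : bilinear_mul mul.
Hypothesis hnat : natural_basis mul e omega.

Local Notation sq := (fun i => mul (e i) (e i)).

Definition desc_closed (X : L -> Prop) :=
  forall i j, X i -> omega j i != 0 -> X j.

Lemma mul0x y : mul 0 y = 0.
Proof. by have [_ [_ [mulZl _]]] := hbil; have := mulZl 0 0 y; rewrite !scale0r. Qed.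

Lemma mulx0 y : mul y 0 = 0.
Proof. by have [_ [_ [_ mulZr]]] := hbil; have := mulZr 0 y 0; rewrite !scale0r. Qed.

Lemma mul_lincomb_l (f : L -> A) s c y :
  mul (lincomb f s c) y = lincomb (fun i => mul (f i) y) s c.
Proof.
have [mulDl [_ [mulZl _]]] := hbil; rewrite /lincomb.
by elim: s => [|i s IH]; rewrite ?big_nil ?mul0x // !big_cons mulDl mulZl IH.
Qed.

Lemma mul_lincomb_r (f : L -> A) s c y :
  mul y (lincomb f s c) = lincomb (fun i => mul y (f i)) s c.
Proof.
have [_ [mulDr [_ mulZr]]] := hbil; rewrite /lincomb.
by elim: s => [|i s IH]; rewrite ?big_nil ?mulx0 // !big_cons mulDr mulZr IH.
Qed.

Lemma lincomb_e_coord t c j : uniq t ->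
  lincomb (fun k => mul (e k) (e j)) t c = (if j \in t then c j else 0) *: sq j.
Proof.
have [_ [mul_e_neq _]] := hnat.
move=> ut; rewrite /lincomb; case: ifP => jt.
  rewrite (bigD1_seq j) //= big1 ?addr0 // => k /negbTE kj.
  by rewrite mul_e_neq ?kj ?scaler0.
rewrite scale0r big1_seq // => k /andP[_ kt].
by rewrite mul_e_neq ?scaler0 //; apply: contraFN jt => /eqP <-.
Qed.

Lemma mul_lincomb_e t c j : uniq t ->
  mul (lincomb e t c) (e j) = (if j \in t then c j else 0) *: sq j.
Proof. by move=> ut; rewrite mul_lincomb_l lincomb_e_coord. Qed.

Lemma mul_e_lincomb t c j : uniq t ->
  mul (e j) (lincomb e t c) = (if j \in t then c j else 0) *: sq j.
Proof.
have [_ [mul_e_neq _]] := hnat.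
move=> ut; rewrite mul_lincomb_r -lincomb_e_coord //; apply: eq_bigr => k _.
by have [->|kj] := eqVneq k j; rewrite // !mul_e_neq // eq_sym.
Qed.

Lemma sq_mul_e k j : mul (sq k) (e j) = omega j k *: sq j.
Proof.
have [_ [_ sqE]] := hnat; have [sk [uk [omega_sk ->]]] := sqE k.
rewrite mul_lincomb_e //; case: ifP => // jk.
by have /eqP-> : omega j k == 0 by apply: contraFT jk => /omega_sk.
Qed.

Lemma e_mul_sq k j : mul (e j) (sq k) = omega j k *: sq j.
Proof.
have [_ [_ sqE]] := hnat; have [sk [uk [omega_sk ->]]] := sqE k.
rewrite mul_e_lincomb //; case: ifP => // jk.
by have /eqP-> : omega j k == 0 by apply: contraFT jk => /omega_sk.
Qed.

Lemma lin_ideal (g : L -> A) (X : L -> Prop) :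
  (forall i j, X i -> lin g X (mul (g i) (e j)) /\ lin g X (mul (e j) (g i))) ->
  is_ideal mul (lin g X).
Proof.
move=> gX; have [lin0 [linD linZ]] := lin_subspace g X.
have [[spanning _] _] := hnat.
do 3 (split=> //); split=> x y [s [c [Xs ->]]]; have [t [d ->]] := spanning y.
- rewrite mul_lincomb_l; apply: subspace_lincomb => [|i /Xs Xi]; first exact: lin_subspace.
  apply: (linZ); rewrite mul_lincomb_r.
  apply: subspace_lincomb => [|j _]; first exact: lin_subspace.
  by apply: (linZ); case: (gX i j Xi).
- rewrite mul_lincomb_r; apply: subspace_lincomb => [|i /Xs Xi]; first exact: lin_subspace.
  apply: (linZ); rewrite mul_lincomb_l.
  apply: subspace_lincomb => [|j _]; first exact: lin_subspace.
  by apply: (linZ); case: (gX i j Xi).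
Qed.

Lemma lin_sq_ideal (X : L -> Prop) : desc_closed X -> is_ideal mul (lin sq X).
Proof.
move=> Xcl; apply: lin_ideal => i j Xi; rewrite sq_mul_e e_mul_sq.
suff linX : lin sq X (omega j i *: sq j) by [].
apply: subspace_scale; first exact: lin_subspace.
by move=> /(Xcl _ _ Xi) Xj; apply: (lin_gen sq).
Qed.

Lemma sq_in_lin_e (X : L -> Prop) i : desc_closed X -> X i -> lin e X (sq i).
Proof.
have [_ [_ sqE]] := hnat; have [si [_ [omega_si ->]]] := sqE i.
move=> Xcl Xi; apply: subspace_lincomb => [|k _]; first exact: lin_subspace.
apply: subspace_scale; first exact: lin_subspace.
by move=> /(Xcl _ _ Xi); apply: lin_gen.
Qed.

Lemma lin_e_ideal (X : L -> Prop) : desc_closed X -> is_ideal mul (lin e X).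
Proof.
have [_ [mul_e_neq _]] := hnat.
move=> Xcl; apply: lin_ideal => i j Xi.
have [<-|ij] := eqVneq i j; first by split; apply: sq_in_lin_e.
by rewrite mul_e_neq // mul_e_neq 1?eq_sym //; split; apply: (lin_subspace e X).1.
Qed.

Lemma sub_lin_supp (J : A -> Prop) (X : L -> Prop) :
  (forall i, suppS e J i -> X i) -> forall x, J x -> lin e X x.
Proof.
have [[spanning _] _] := hnat.
move=> JX x Jx; have [t [c xE]] := spanning x; rewrite xE lincomb_undup.
apply: subspace_lincomb => [|i it]; first exact: lin_subspace.
apply: subspace_scale; first exact: lin_subspace.
move=> ci; apply/lin_gen/JX; exists x; split=> //.
exists (undup t), (fun i => (count_mem i t)%:R * c i).
by rewrite undup_uniq -lincomb_undup -xE.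
Qed.

Section Ideal.
Variable J : A -> Prop.
Hypothesis hJ : is_ideal mul J.

Lemma ideal_unscale (a : K) x : a != 0 -> J (a *: x) -> J x.
Proof. by move=> a0 /(hJ.2.2.1 a^-1); rewrite scalerA mulVf // scale1r. Qed.

Lemma ideal_sq_supp i : suppS e J i -> J (sq i).
Proof.
move=> [x [Jx [t [c [ut [xE [it ci]]]]]]].
move: Jx; rewrite xE => /(hJ.2.2.2.1 _ (e i)).
by rewrite mul_lincomb_e // it; apply: ideal_unscale.
Qed.

Lemma ideal_sq_descn n i j : J (sq i) -> descn omega n i j -> J (sq j).
Proof.
elim: n j => [|n IH] j Ji /=; first by move <-.
move=> [k [ik kj]]; apply: (ideal_unscale kj); rewrite -sq_mul_e.
exact/hJ.2.2.2.1/IH.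
Qed.

End Ideal.

Section StructureMatrix.
Variable s : seq L.
Hypotheses (us : uniq s) (s_all : forall i, i \in s).

Local Notation n := (size s).
Local Notation idx p := (tnth (in_tuple s) p).

Definition of_coord (u : 'rV[K]_n) : A := \sum_(p < n) u 0 p *: e (idx p).

Lemma sq_expand j : \sum_(p < n) omega (idx p) j *: e (idx p) = sq j.
Proof.
have [_ [_ sqE]] := hnat; have [sj [uj [omega_sj ->]]] := sqE j.
rewrite -(big_tuple 0 +%R (in_tuple s) xpredT (fun k => omega k j *: e k)).
rewrite /lincomb -(big_mkcond_subseq _ uj us) //; apply: eq_bigr => k _.
case: ifP => // kj; have /eqP-> : omega k j == 0 by apply: contraFT kj => /omega_sj.
by rewrite scale0r.
Qed.

Lemma of_coord_mul_struct (w : 'rV[K]_n) :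
  of_coord (w *m (struct_mx omega s)^T) = \sum_(q < n) w 0 q *: sq (idx q).
Proof.
rewrite /of_coord; under eq_bigr => p _ do rewrite mxE scaler_suml.
rewrite exchange_big; apply: eq_bigr => q _; rewrite -sq_expand scaler_sumr.
by apply: eq_bigr => p _; rewrite !mxE scalerA.
Qed.

Lemma of_coord_delta (i : L) (k : 'I_n) : idx k = i -> of_coord (delta_mx 0 k) = e i.
Proof.
move=> ki; rewrite /of_coord (bigD1 k) //= big1 => [|p pk].
  by rewrite mxE !eqxx scale1r addr0 ki.
by rewrite mxE (negbTE pk) andbF scale0r.
Qed.

Lemma e_in_lin_sq (X : L -> Prop) : desc_closed X ->
  \det (struct_mx omega s) != 0 -> forall i, X i -> lin sq X (e i).
Proof.
move=> Xcl det_neq0 i Xi.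
pose inX j := if excluded_middle_informative (X j) then true else false.
have inXP j : reflect (X j) (inX j).
  by rewrite /inX; case: excluded_middle_informative => Xj; constructor.
pose D := diag_mx (\row_q (inX (idx q))%:R : 'rV[K]_n).
pose N := (struct_mx omega s)^T.
have N_unit : N \in unitmx by rewrite unitmxE det_tr unitfE.
have DN_stable : (D *m N <= D)%MS.
  suff -> : D *m N = D *m N *m D by apply: submxMl.
  apply/matrixP => q p; rewrite mul_mx_diag mul_diag_mx !mxE.
  have [/inXP Xq|] := boolP (inX (idx q)); last by rewrite !mul0r.
  have [//|/inXP notXp] := boolP (inX (idx p)); first by rewrite mulr1.
  have /eqP-> : omega (idx p) (idx q) == 0 by apply: contra_notT notXp => /(Xcl _ _ Xq).
  by rewrite !mulr0.
have /submxP[v Dv] := submx_unit_stable N_unit DN_stable.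
have i_idx : (index i s < n)%N by rewrite index_mem.
pose k := Ordinal i_idx.
have ki : idx k = i by rewrite (tnth_nth i) /= nth_index.
have k_in_D : delta_mx 0 k = delta_mx 0 k *m D :> 'rV[K]_n.
  apply/matrixP => a b; rewrite mul_mx_diag !mxE.
  have [->|bk] := eqVneq b k; last by rewrite andbF mul0r.
  by rewrite ki; case: inXP => //= _; rewrite mulr1.
rewrite -(of_coord_delta ki) k_in_D Dv !mulmxA of_coord_mul_struct.
apply: subspace_sum => [|q _]; first exact: lin_subspace.
apply: subspace_scale; first exact: lin_subspace.
rewrite mul_mx_diag !mxE; case: inXP => [Xq _|_]; first exact: (lin_gen sq).
by rewrite mulr0 eqxx.
Qed.

End StructureMatrix.

End EvolutionAlgebra.

Theorem proposition5p6 (K : fieldType) (A : lmodType K) (L : eqType)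
  (mul : A -> A -> A) (e : L -> A) (omega : L -> L -> K)
  (hbil : bilinear_mul mul) (hnat : natural_basis mul e omega)
  (J : A -> Prop) (hJ : is_ideal mul J) (hJ0 : exists x, J x /\ x != 0) :
  let X := fun i => suppS e J i \/ descS omega (suppS e J) i in
  let I1 := lin (fun i => mul (e i) (e i)) X in
  let I2 := lin e X in
  is_ideal mul I1 /\ is_ideal mul I2 /\
  (forall x, I1 x -> J x) /\ (forall x, J x -> I2 x) /\
  (forall s : seq L, uniq s -> (forall i, i \in s) ->
     \det (struct_mx omega s) != 0 ->
     forall x, (I1 x <-> J x) /\ (J x <-> I2 x)).
Proof.
move=> X I1 I2.
have Xcl : desc_closed omega X.
  move=> i j [Si | [i0 [Si0 [n [_ Dn]]]]] ji; right.
    by exists i; split=> //; exists 1%N; split=> //; exists i.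
  by exists i0; split=> //; exists n.+1; split=> //; exists i.
have I1J x : I1 x -> J x.
  apply: lin_min x => [|i [/(ideal_sq_supp hbil hnat hJ) //|[i0 [Si0 [n [_ Dn]]]]]].
    exact: ideal_subspace hJ.
  exact: (ideal_sq_descn hbil hnat hJ (ideal_sq_supp hbil hnat hJ Si0) Dn).
have JI2 : forall x, J x -> I2 x := sub_lin_supp hnat (fun i Si => or_introl Si).
split; first exact: (lin_sq_ideal hbil hnat Xcl).
split; first exact: (lin_e_ideal hbil hnat Xcl).
split=> //; split=> // s us s_all det_neq0.
have I2I1 x : I2 x -> I1 x.
  apply: lin_min x => [|i Xi]; first exact: lin_subspace.
  exact: (e_in_lin_sq hnat us s_all Xcl det_neq0 Xi).
move=> x; split; split.
- exact: I1J.
- by move/JI2/I2I1.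
- exact: JI2.
- by move/I2I1/I1J.
Qed.
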